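(* Let $n\ge 4$ and let $D_n$ be the tree obtained from the path on $n-1$ vertices by adding a pendant edge at the second vertex of the path. Then the number of main eigenvalues of $D_n$ is $n-1$ if $4\nmid n$, and $n-2$ if $4\mid n$.
   Context: An eigenvalue of a graph with adjacency matrix $A$ is called main if $A$ has an eigenvector for it that is not orthogonal to the all-ones vector. *)

From HB Require Import structures.
From mathcomp Require Import all_boot all_order all_algebra.
From mathcomp Require Import reals.
Set Implicit Arguments. Unset Strict Implicit. Unset Printing Implicit Defensive.
Import Order.TTheory GRing.Theory Num.Theory.
Local Open Scope ring_scope.

(* Vertices of D_n are 0, 1, ..., n-1.  The path on n-1 vertices is
   0 - 1 - ... - (n-2); the pendant vertex n-1 is attached to vertex 1
   (the second vertex of the path). *)
Definition Dn_edge (n : nat) (i j : 'I_n) : bool :=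
  [&& ((i.+1 == j) || (j.+1 == i)), (i < n.-1)%N & (j < n.-1)%N]
  || ((i == 1%N :> nat) && (j == n.-1 :> nat))
  || ((j == 1%N :> nat) && (i == n.-1 :> nat)).

Definition Dn_adj (R : realType) (n : nat) : 'M[R]_n :=
  \matrix_(i, j) (Dn_edge i j)%:R.

Definition main_eigenvalue (R : realType) (n : nat) (A : 'M[R]_n) (l : R) : Prop :=
  exists v : 'cV[R]_n, [/\ v != 0, A *m v = l *: v & \sum_i v i 0 != 0].

(* Number the vertices so that the path is 0 - 1 - ... - (m-1) and the pendant
   vertex m hangs from 1, so n = m + 1.  Along the path an eigenvector for l is
   determined by its value at the end m-1 through the Chebyshev recurrence, and
   the equations at 0, 1 and m then make l a root of a polynomial of degree m,
   unless that value is 0, which forces l = 0.  The m distinct numbers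
   lam k = 2 cos ((2k+1) pi / 2m), k < m, are eigenvalues, with eigenvector
   x |-> 2 cos (x theta_k) (and 1 at the leaves 0 and m); so they are all the
   roots, and every nonzero eigenvalue is one of them.  A telescoping sum shows
   that the coordinate sum of that eigenvector vanishes only if k is odd and
   lam k = 0.  Finally, 0 is main only when m = 1 (mod 4): otherwise a 0/1
   vector w satisfies A w = 1, so the all-ones vector is orthogonal to the
   kernel of the symmetric matrix A. *)

Set Warnings "-notation-overridden,-ambiguous-paths,-notation-incompatible-prefix".
From HB Require Import structures.
From mathcomp Require Import all_boot all_order all_algebra.
From mathcomp Require Import reals trigo zify ring lra.
Set Implicit Arguments. Unset Strict Implicit. Unset Printing Implicit Defensive.
Import Order.TTheory GRing.Theory Num.Theory.
Local Open Scope ring_scope.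

Lemma root_mem_of_size (R : idomainType) (p : {poly R}) (s : seq R) (x : R) :
  p != 0 -> size p = (size s).+1 -> uniq s -> all (root p) s -> root p x -> x \in s.
Proof.
move=> p_neq0 size_p uniq_s roots_s px; apply/contraT => xNs.
have := @max_poly_roots _ p (x :: s) p_neq0.
by rewrite /= size_p ltnn px roots_s xNs uniq_s => /(_ isT isT).
Qed.

Lemma sum_kernel_eq0 (R : pzRingType) (n : nat) (A : 'M[R]_n) (w : 'rV[R]_n)
    (v : 'cV[R]_n) :
  w *m A = const_mx 1 -> A *m v = 0 -> \sum_i v i 0 = 0.
Proof.
move=> wA Av; have : ((const_mx 1 : 'rV[R]_n) *m v) 0 0 = 0.
  by rewrite -wA -mulmxA Av mulmx0 mxE.
by rewrite mxE; under eq_bigr do rewrite mxE mul1r.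
Qed.

Section Chebyshev.
Variable R : nzRingType.

Fixpoint chebU (k : nat) : {poly R} :=
  match k with
  | 0 => 1
  | 1 => 'X
  | (k'.+1 as k1).+1 => 'X * chebU k1 - chebU k'
  end.

Lemma chebUSS k : chebU k.+2 = 'X * chebU k.+1 - chebU k.
Proof. by []. Qed.

Lemma size_chebU k : size (chebU k) = k.+1.
Proof.
suff : size (chebU k) = k.+1 /\ size (chebU k.+1) = k.+2 by case.
elim: k => [|k [sizeU sizeU1]]; first by rewrite size_poly1 size_polyX.
split=> //; have U1_neq0 : chebU k.+1 != 0 by rewrite -size_poly_eq0 sizeU1.
have sizeXU : size ('X * chebU k.+1) = k.+3.
  by rewrite size_monicM ?monicX // size_polyX sizeU1.
by rewrite chebUSS size_polyDl sizeXU // size_polyN sizeU.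
Qed.

End Chebyshev.

Section Trigonometry.
Variable R : realType.

Lemma cos_pihalfDmulpi (k : nat) : cos (pi / 2 + k%:R * pi) = 0 :> R.
Proof.
elim: k => [|k IHk]; first by rewrite mul0r addr0 cos_pihalf.
by rewrite [k.+1%:R]mulrSr (mulrDl _ 1) mul1r addrA cosDpi IHk oppr0.
Qed.

Lemma sin_pihalfDmulpi (k : nat) : sin (pi / 2 + k%:R * pi) = (-1) ^+ k :> R.
Proof.
elim: k => [|k IHk]; first by rewrite mul0r addr0 sin_pihalf.
by rewrite [k.+1%:R]mulrSr (mulrDl _ 1) mul1r addrA sinDpi IHk exprS mulN1r.
Qed.

Lemma cos_natmul_rec (th : R) (i : nat) :
  cos (i.+2%:R * th) + cos (i%:R * th) = 2 * cos th * cos (i.+1%:R * th).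
Proof.
have -> : i.+2%:R * th = i.+1%:R * th + th by rewrite [i.+2%:R]mulrSr (mulrDl _ 1) mul1r.
have -> : i%:R * th = i.+1%:R * th - th by rewrite [i.+1%:R]mulrSr (mulrDl _ 1) mul1r addrK.
by rewrite cosD cosB; ring.
Qed.

Lemma sum_cos_telescope (phi : R) (N : nat) :
  2 * sin phi * \sum_(i < N) cos (i%:R * phi *+ 2)
  = sin (N%:R * phi *+ 2 - phi) + sin phi.
Proof.
elim: N => [|N IHN]; first by rewrite big_ord0 mulr0 mul0r mul0rn add0r sinN addNr.
rewrite big_ord_recr /= mulrDr IHN.
have -> : N.+1%:R * phi *+ 2 - phi = N%:R * phi *+ 2 + phi.
  by rewrite [N.+1%:R]mulrSr !mulr2n; ring.
by move: (N%:R * phi *+ 2) => a; rewrite sinB sinD; ring.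
Qed.

End Trigonometry.

Lemma Dn_edgeC (n : nat) (i j : 'I_n) : Dn_edge i j = Dn_edge j i.
Proof. rewrite /Dn_edge; lia. Qed.

Lemma Dn_adj_tr (R : realType) (n : nat) : (Dn_adj R n)^T = Dn_adj R n.
Proof. by apply/matrixP => i j; rewrite !mxE Dn_edgeC. Qed.

Section Dn.
Variables (R : realType) (m : nat).
Hypothesis m_ge3 : (3 <= m)%N.
Local Notation A := (Dn_adj R m.+1).

(* The four kinds of neighbours are mutually exclusive, so the indicator splits. *)
Lemma Dn_edgeE (i j : 'I_m.+1) :
  (Dn_edge i j : nat) = ([&& 0 < i < m & j == i.-1 :> nat]
    + [&& i.+1 < m & j == i.+1 :> nat] + [&& i == 1 :> nat & j == m :> nat]
    + [&& i == m :> nat & j == 1 :> nat])%N.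
Proof. case: i j => i lt_i [j lt_j]; rewrite /Dn_edge /=; lia. Qed.

Definition col_of (g : nat -> R) : 'cV[R]_m.+1 := \col_(k < m.+1) g k.

Definition fun_of_col (v : 'cV[R]_m.+1) (k : nat) : R := v (inord k) 0.

Lemma col_of_fun_of_col v : col_of (fun_of_col v) = v.
Proof. by apply/matrixP => i j; rewrite !mxE ord1 /fun_of_col inord_val. Qed.

Definition nbr_sum (g : nat -> R) (i : nat) : R :=
  if (i < m)%N then
    (if (0 < i)%N then g i.-1 else 0) + (if (i.+1 < m)%N then g i.+1 else 0)
    + (if i == 1%N then g m else 0)
  else g 1%N.

Lemma sum_mul_indicator (g : nat -> R) (b : bool) (k : nat) : (b -> k < m.+1)%N ->
  \sum_(j < m.+1) ((b && (j == k :> nat))%:R * g j) = if b then g k else 0.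
Proof.
case: b => [/(_ isT) lt_k | _]; last by rewrite big1 // => j _; rewrite mul0r.
rewrite (bigD1 (Ordinal lt_k)) //= eqxx mul1r big1 ?addr0 // => j /negPf j_neq.
by rewrite -val_eqE /= in j_neq; rewrite j_neq mul0r.
Qed.

Lemma Dn_adj_col (g : nat -> R) (i : 'I_m.+1) : (A *m col_of g) i 0 = nbr_sum g i.
Proof.
rewrite mxE; under eq_bigr do rewrite !mxE Dn_edgeE !natrD !mulrDl.
rewrite !big_split /= !sum_mul_indicator; try lia.
case: i => i lt_i; rewrite /nbr_sum /=.
have [lt_im|le_mi] := ltnP i m; first by rewrite andbT (ltn_eqF lt_im) addr0.
have -> : i = m by lia.
have -> : (m.+1 < m)%N = false by lia.
have -> : (m == 1)%N = false by lia.
by rewrite andbF eqxx !add0r.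
Qed.

Lemma nbr_sum0 g : nbr_sum g 0 = g 1%N.
Proof.
rewrite /nbr_sum; have -> : (0 < m)%N by lia.
have -> : (1 < m)%N by lia.
by rewrite add0r addr0.
Qed.

Lemma nbr_sum1 g : nbr_sum g 1 = g 0%N + g 2%N + g m.
Proof.
rewrite /nbr_sum; have -> : (1 < m)%N by lia.
by have -> : (2 < m)%N by lia.
Qed.

Lemma nbr_sum_inner g i : (1 < i)%N -> (i.+1 < m)%N -> nbr_sum g i = g i.-1 + g i.+1.
Proof.
move=> gt1_i lt_i; rewrite /nbr_sum lt_i; have -> : (i < m)%N by lia.
have -> : (0 < i)%N by lia.
have -> : (i == 1)%N = false by lia.
by rewrite addr0.
Qed.

Lemma nbr_sum_end g : nbr_sum g m.-1 = g m.-2.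
Proof.
rewrite /nbr_sum; have -> : (m.-1 < m)%N by lia.
have -> : (0 < m.-1)%N by lia.
have -> : (m.-1.+1 < m)%N = false by lia.
have -> : (m.-1 == 1)%N = false by lia.
by rewrite !addr0.
Qed.

Lemma nbr_sum_pendant g : nbr_sum g m = g 1%N.
Proof. by rewrite /nbr_sum ltnn. Qed.

Lemma nbr_sumP (g h : nat -> R) :
  g 1%N = h 0%N -> g 0%N + g 2%N + g m = h 1%N ->
  (forall i, (1 < i)%N -> (i.+1 < m)%N -> g i.-1 + g i.+1 = h i) ->
  g m.-2 = h m.-1 -> g 1%N = h m ->
  forall i, (i <= m)%N -> nbr_sum g i = h i.
Proof.
move=> eq0 eq1 eq_inner eq_end eq_pendant i le_im.
have [-> | ?] := eqVneq i 0%N; first by rewrite nbr_sum0.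
have [-> | ?] := eqVneq i 1%N; first by rewrite nbr_sum1.
have [-> | ?] := eqVneq i m; first by rewrite nbr_sum_pendant.
have [-> | ?] := eqVneq i m.-1; first by rewrite nbr_sum_end.
by rewrite nbr_sum_inner ?eq_inner //; lia.
Qed.

Definition eigen_fun (l : R) (g : nat -> R) : Prop :=
  forall i, (i <= m)%N -> nbr_sum g i = l * g i.

Lemma eigen_fun_col (v : 'cV[R]_m.+1) l : A *m v = l *: v -> eigen_fun l (fun_of_col v).
Proof.
move=> Av i le_im; have := Dn_adj_col (fun_of_col v) (inord i).
by rewrite col_of_fun_of_col Av mxE inordK.
Qed.

Definition Dn_poly : {poly R} := ('X^2 - 2%:P) * chebU R m.-2 - 'X * chebU R (m - 3).

Lemma size_Dn_poly : size Dn_poly = m.+1.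
Proof.
have U_neq0 k : chebU R k != 0 by rewrite -size_poly_eq0 size_chebU.
have size_l : size (('X^2 - 2%:P) * chebU R m.-2) = m.+1.
  by rewrite size_monicM ?monicXnsubC // size_chebU size_XnsubC //; lia.
have size_r : size ('X * chebU R (m - 3)) = m.-1.
  by rewrite size_monicM ?monicX // size_polyX size_chebU; lia.
by rewrite size_polyDl size_l // size_polyN size_r; lia.
Qed.

Section EigenFun.
Variables (l : R) (g : nat -> R).
Hypothesis g_eig : eigen_fun l g.

Lemma eigen_fun_chebU k : (k <= m.-2)%N -> g (m.-1 - k) = (chebU R k).[l] * g m.-1.
Proof.
suff chebU2 j : (j.+1 <= m.-2)%N -> g (m.-1 - j) = (chebU R j).[l] * g m.-1 /\
    g (m.-1 - j.+1) = (chebU R j.+1).[l] * g m.-1.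
  by case: k => [|k /chebU2 []//]; rewrite subn0 hornerC mul1r.
elim: j => [|j IHj] lt_j.
  split; first by rewrite subn0 hornerC mul1r.
  have := g_eig (leq_pred m); rewrite nbr_sum_end hornerX => <-; congr g; lia.
have [IH0 IH1] := IHj (ltnW lt_j); split=> //.
have e : nbr_sum g (m.-1 - j.+1) = l * g (m.-1 - j.+1) by apply: g_eig; lia.
rewrite nbr_sum_inner in e; try lia.
have -> : (m.-1 - j.+2)%N = (m.-1 - j.+1).-1 by lia.
have e2 : g (m.-1 - j.+1).+1 = g (m.-1 - j) by congr g; lia.
have -> : g (m.-1 - j.+1).-1 = l * g (m.-1 - j.+1) - g (m.-1 - j) by rewrite -e e2 addrK.
by rewrite chebUSS hornerD hornerN hornerM hornerX IH0 IH1; ring.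
Qed.

Lemma eigen_fun_root : g m.-1 != 0 -> root Dn_poly l.
Proof.
move=> gm1_neq0.
have e0 : g 1%N = l * g 0%N by rewrite -nbr_sum0 g_eig.
have e1 : g 0%N + g 2%N + g m = l * g 1%N by rewrite -nbr_sum1 g_eig //; lia.
have em : g 1%N = l * g m by rewrite -nbr_sum_pendant g_eig.
have g1 : g 1%N = (chebU R m.-2).[l] * g m.-1 by rewrite -eigen_fun_chebU //; congr g; lia.
have g2 : g 2%N = (chebU R (m - 3)).[l] * g m.-1 by rewrite -eigen_fun_chebU; [congr g|]; lia.
(* multiply the equation at vertex 1 by l and use those at the leaves 0 and m *)
have key : (l ^+ 2 - 2) * g 1%N - l * g 2%N = 0.
  by rewrite mulrBl expr2 -mulrA -e1 !mulrDr -e0 -em; ring.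
apply/eqP/(mulIf gm1_neq0); rewrite mul0r -key g1 g2 /Dn_poly.
by rewrite hornerD hornerN !hornerM hornerX hornerD hornerN hornerXn hornerC; ring.
Qed.

Lemma eigen_fun_path_eq0 : g m.-1 = 0 -> forall i, (0 < i < m)%N -> g i = 0.
Proof.
move=> gm1_eq0 i /andP[i_gt0 lt_im]; have -> : i = (m.-1 - (m.-1 - i))%N by lia.
by rewrite eigen_fun_chebU ?gm1_eq0 ?mulr0 //; lia.
Qed.

Lemma eigen_fun_leaf_sum : g m.-1 = 0 -> g 0%N + g m = 0.
Proof.
move=> gm1_eq0.
have g1_eq0 : g 1%N = 0 by apply: eigen_fun_path_eq0 => //; lia.
have g2_eq0 : g 2%N = 0 by apply: eigen_fun_path_eq0 => //; lia.
by have := g_eig (ltnW (ltnW m_ge3)); rewrite nbr_sum1 g1_eq0 g2_eq0 mulr0 addr0.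
Qed.

Lemma eigen_fun_eq0 : g m.-1 = 0 -> l != 0 -> forall i, (i <= m)%N -> g i = 0.
Proof.
move=> gm1_eq0 l_neq0 i le_im.
have g1_eq0 : g 1%N = 0 by rewrite eigen_fun_path_eq0 //; lia.
have leaf x : 0 = l * g x -> g x = 0.
  by move/esym/eqP; rewrite mulf_eq0 (negPf l_neq0) => /eqP.
have [-> | ?] := eqVneq i 0%N.
  by apply: leaf; rewrite -g1_eq0 -nbr_sum0 g_eig.
have [-> | ?] := eqVneq i m.
  by apply: leaf; rewrite -g1_eq0 -nbr_sum_pendant g_eig.
by rewrite eigen_fun_path_eq0 //; lia.
Qed.

End EigenFun.

(* 4-periodic along the path, with the phase chosen to fit both ends of the path;
   this is impossible exactly when m = 1 (mod 4). *)
Definition ones_preimage (x : nat) : R :=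
  ((x != m) && [|| (x + (m %% 4 == 2)) %% 4 == 1 | (x + (m %% 4 == 2)) %% 4 == 2])%N%:R.

Lemma Dn_adj_ones_preimage : (m %% 4 != 1)%N -> A *m col_of ones_preimage = const_mx 1.
Proof.
move=> m_mod4; apply/matrixP => i j; rewrite ord1 Dn_adj_col mxE.
apply: (@nbr_sumP _ (fun=> 1)); last by rewrite -ltnS.
all: move=> *; rewrite /ones_preimage -?natrD; apply/eqP; rewrite pnatr_eq1; lia.
Qed.

Lemma main_eigenvalue0 : main_eigenvalue A 0 -> (m %% 4 = 1)%N.
Proof.
case=> v [_ Av]; apply: contraNeq => m_mod4.
have wA : (col_of ones_preimage)^T *m A = const_mx 1.
  by rewrite -[A in _ *m A]Dn_adj_tr -trmx_mul Dn_adj_ones_preimage // trmx_const.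
by apply/eqP; apply: (sum_kernel_eq0 wA); rewrite Av scale0r.
Qed.

Definition cos_eigvec (th : R) (x : nat) : R :=
  if (x == 0)%N || (x == m) then 1 else 2 * cos (x%:R * th).

Lemma cos_eigvec_eigen_fun th :
  cos (m%:R * th) = 0 -> eigen_fun (2 * cos th) (cos_eigvec th).
Proof.
move=> cos_mth.
have inner x : (0 < x < m)%N -> cos_eigvec th x = 2 * cos (x%:R * th).
  by move=> x_itv; rewrite /cos_eigvec ifF //; lia.
have leaf0 : cos_eigvec th 0 = 1 by [].
have leafm : cos_eigvec th m = 1 by rewrite /cos_eigvec eqxx orbT.
have g1 : cos_eigvec th 1 = 2 * cos th by rewrite inner ?mul1r //; lia.
apply: nbr_sumP.
- by rewrite g1 leaf0 mulr1.
- rewrite leaf0 leafm g1 inner; last lia.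
  by have := cos_natmul_rec th 0; rewrite mul0r cos0 mul1r => rec; lra.
- case=> [|[|j]] // _ lt_j; rewrite !inner; try lia.
  by rewrite /= addrC -mulrDr cos_natmul_rec; ring.
- have rec := cos_natmul_rec th m.-2.
  rewrite (_ : m.-2.+2 = m) ?cos_mth ?add0r (_ : m.-2.+1 = m.-1) in rec; try lia.
  by rewrite !inner ?rec; [ring | lia | lia].
- by rewrite g1 leafm mulr1.
Qed.

Lemma sum_cos_eigvec th :
  \sum_i col_of (cos_eigvec th) i 0 = 2 * \sum_(i < m) cos (i%:R * th).
Proof.
have [m' m_eq] : exists m', m = m'.+1 by exists m.-1; lia.
have inner (i : 'I_m') : cos_eigvec th i.+1 = 2 * cos (i.+1%:R * th).
  by rewrite /cos_eigvec ifF //; have := ltn_ord i; lia.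
have leafm : cos_eigvec th m'.+1 = 1 by rewrite /cos_eigvec -m_eq eqxx orbT.
under eq_bigr do rewrite mxE.
rewrite m_eq big_ord_recl big_ord_recr /= leafm [in RHS]big_ord_recl mul0r cos0.
under eq_bigr do rewrite /= inner.
under [in RHS]eq_bigr do rewrite lift0.
by rewrite -mulr_sumr [cos_eigvec _ _]/cos_eigvec /=; ring.
Qed.

Definition theta (k : nat) : R := (k.*2.+1)%:R * (pi / (m.*2)%:R).

Definition lam (k : nat) : R := 2 * cos (theta k).

Lemma pi_div_neq0 : pi / (m.*2)%:R != 0 :> R.
Proof. by rewrite mulf_neq0 ?invr_eq0 ?pnatr_eq0 ?gt_eqF ?pi_gt0 //; lia. Qed.

Lemma mul_theta k : m%:R * theta k = pi / 2 + k%:R * pi.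
Proof.
rewrite /theta -!muln2 -addn1 !natrD !natrM; field.
by rewrite pnatr_eq0; lia.
Qed.

Lemma theta_itv k : (k < m)%N -> 0 < theta k < pi.
Proof.
move=> lt_km; have pi_gt0 := @pi_gt0 R.
have m2_gt0 : 0 < (m.*2)%:R :> R by rewrite ltr0n; lia.
rewrite /theta; apply/andP; split; first by rewrite mulr_gt0 ?ltr0n // divr_gt0.
by rewrite mulrA ltr_pdivrMr // mulrC ltr_pM2l // ltr_nat; lia.
Qed.

Lemma theta_inj : injective theta.
Proof.
move=> k k' /(mulIf pi_div_neq0)/eqP; rewrite eqr_nat => /eqP; lia.
Qed.

Lemma theta_eq_pihalf k : (theta k == pi / 2) = (k.*2.+1 == m)%N.
Proof.
have -> : pi / 2 = m%:R * (pi / (m.*2)%:R) :> R.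
  by rewrite -muln2 natrM; field; rewrite pnatr_eq0; lia.
by rewrite (inj_eq (mulIf pi_div_neq0)) eqr_nat.
Qed.

Lemma theta_in_itv k : (k < m)%N -> theta k \in `[0, pi].
Proof. by move=> /theta_itv /andP[? ?]; rewrite in_itv /= !ltW. Qed.

Lemma lam_inj k k' : (k < m)%N -> (k' < m)%N -> lam k = lam k' -> k = k'.
Proof.
move=> lt_km lt_k'm /(mulfI (_ : 2 != 0)) cos_eq; apply: theta_inj.
by apply: cos_inj; rewrite ?theta_in_itv // cos_eq // pnatr_eq0.
Qed.

Lemma lam_eq0 k : (k < m)%N -> (lam k == 0) = (k.*2.+1 == m)%N.
Proof.
move=> lt_km; rewrite -theta_eq_pihalf mulf_eq0 pnatr_eq0 /=.
apply/eqP/eqP => [cos_eq0 | ->]; last exact: cos_pihalf.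
apply: cos_inj; rewrite ?theta_in_itv ?cos_pihalf //.
by rewrite in_itv /= divr_ge0 ?pi_ge0 // ler_pdivrMr // ler_peMr ?pi_ge0 // ler1n.
Qed.

Lemma lam_eigen_fun k : eigen_fun (lam k) (cos_eigvec (theta k)).
Proof. by apply: cos_eigvec_eigen_fun; rewrite mul_theta cos_pihalfDmulpi. Qed.

Lemma root_Dn_poly_lam k : root Dn_poly (lam k).
Proof.
apply: (eigen_fun_root (lam_eigen_fun k)); apply/eqP => vanish.
have := eigen_fun_leaf_sum (lam_eigen_fun k) vanish.
by rewrite /cos_eigvec !eqxx orbT /=; lra.
Qed.

Lemma sum_cos_theta_neq0 k : (k < m)%N -> ~~ odd k || (lam k != 0) ->
  \sum_(i < m) cos (i%:R * theta k) != 0.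
Proof.
move=> lt_km main_k; set phi := theta k / 2.
have th_phi : theta k = phi *+ 2 by rewrite mulr2n -splitr.
have /andP[th_gt0 th_ltpi] := theta_itv lt_km.
have sin_gt0 : 0 < sin phi by apply: sin_gt0_pihalf; rewrite /phi; lra.
have cos_gt0 : 0 < cos phi by apply: cos_gt0_pihalf; rewrite /phi; lra.
apply/negP => /eqP sum_eq0; have := sum_cos_telescope phi m.
under eq_bigr do rewrite -mulrnAr -th_phi.
rewrite -mulrnAr -th_phi mul_theta sinB cos_pihalfDmulpi sin_pihalfDmulpi -signr_odd.
rewrite sum_eq0 mulr0 mul0r subr0.
move: main_k; case: (odd k) => /= [lam_neq0 | _]; last by rewrite expr0 mul1r; lra.
rewrite expr1 mulN1r => sin_cos; move/negP: lam_neq0; apply; apply/eqP.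
have sin_eq : sin phi = cos phi by lra.
have := cos2Dsin2 phi; rewrite sin_eq /lam th_phi cos_mulr2n mulr2n; lra.
Qed.

Lemma main_eigenvalue_lam k : (k < m)%N -> ~~ odd k || (lam k != 0) ->
  main_eigenvalue A (lam k).
Proof.
move=> lt_km main_k; exists (col_of (cos_eigvec (theta k))); split.
- by apply/eqP => /matrixP/(_ ord0 ord0)/eqP; rewrite !mxE oner_eq0.
- apply/matrixP => i j; rewrite ord1 Dn_adj_col [RHS]mxE mxE.
  by rewrite lam_eigen_fun // -ltnS.
- by rewrite sum_cos_eigvec mulf_neq0 ?pnatr_eq0 // sum_cos_theta_neq0.
Qed.

Lemma nonzero_eigenvalue_lam (v : 'cV[R]_m.+1) l :
  v != 0 -> A *m v = l *: v -> l != 0 -> l \in [seq lam k | k <- iota 0 m].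
Proof.
move=> v_neq0 Av l_neq0; have g_eig := eigen_fun_col Av.
have gm1_neq0 : fun_of_col v m.-1 != 0.
  apply: contraNneq v_neq0 => gm1_eq0; rewrite -(col_of_fun_of_col v).
  by apply/eqP/matrixP => i j; rewrite !mxE (eigen_fun_eq0 g_eig) // -ltnS.
have Dn_poly_neq0 : Dn_poly != 0 by rewrite -size_poly_eq0 size_Dn_poly.
apply: (root_mem_of_size Dn_poly_neq0 _ _ _ (eigen_fun_root g_eig gm1_neq0)).
- by rewrite size_Dn_poly size_map size_iota.
- rewrite map_inj_in_uniq ?iota_uniq // => k k'; rewrite !mem_iota.
  by move=> lt_k lt_k'; apply: lam_inj; lia.
- by apply/allP => _ /mapP[k _ ->]; apply: root_Dn_poly_lam.
Qed.

(* Excludes only k = m./2 for m = 3 (mod 4), where lam k = 0 and the eigenvector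
   sum vanishes. *)
Definition main_index (k : nat) : bool := ~~ odd k || (k.*2.+1 != m).

Definition main_spectrum : seq R := map lam (filter main_index (iota 0 m)).

Lemma uniq_main_spectrum : uniq main_spectrum.
Proof.
rewrite map_inj_in_uniq ?filter_uniq ?iota_uniq // => k k'.
by rewrite !mem_filter !mem_iota => /andP[_ lt_k] /andP[_ lt_k']; apply: lam_inj; lia.
Qed.

Lemma size_main_spectrum : size main_spectrum = if (4 %| m.+1)%N then m.-1 else m.
Proof.
rewrite size_map size_filter; have := count_predC main_index (iota 0 m).
rewrite size_iota; case: ifP => m_mod4.
  rewrite (@eq_count _ (predC main_index) (pred1 m./2)) => [|k]; last first.
    by rewrite /= /main_index; lia.
  by rewrite count_uniq_mem ?iota_uniq // mem_iota; lia.
rewrite (@eq_count _ (predC main_index) pred0) ?count_pred0 => [|k]; first lia.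
by rewrite /= /main_index; lia.
Qed.

Lemma main_spectrumP l : l \in main_spectrum <-> main_eigenvalue A l.
Proof.
split.
  case/mapP => k; rewrite mem_filter mem_iota => /andP[main_k /andP[_ lt_km]] ->.
  by apply: main_eigenvalue_lam; rewrite // /main_index -lam_eq0 in main_k.
move=> main_l; apply/mapP.
have [l_eq0 | l_neq0] := eqVneq l 0.
  have m_mod4 : (m %% 4 = 1)%N by apply: main_eigenvalue0; rewrite -l_eq0.
  exists m./2; first by rewrite mem_filter mem_iota /main_index; lia.
  by rewrite l_eq0; apply/esym/eqP; rewrite lam_eq0; lia.
case: main_l => v [v_neq0 Av _]; have /mapP[k] := nonzero_eigenvalue_lam v_neq0 Av l_neq0.
rewrite mem_iota => /andP[_ lt_km] l_eq; exists k => //.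
by rewrite mem_filter mem_iota /main_index -lam_eq0 // -l_eq l_neq0 orbT /=.
Qed.

End Dn.

Theorem corollary1p4 (R : realType) (n : nat) : (4 <= n)%N ->
  exists s : seq R,
    [/\ uniq s,
        (forall l : R, l \in s <-> main_eigenvalue (Dn_adj R n) l)
      & size s = (if (4 %| n)%N then (n - 2)%N else (n - 1)%N)].
Proof.
case: n => [|m] // m_ge3; exists (main_spectrum R m); split.
- exact: uniq_main_spectrum.
- exact: main_spectrumP.
- by rewrite size_main_spectrum //; case: ifP => _; lia.
Qed.
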